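(* For all $c,d\in\Lambda_1(\mathbb{Q}\mathrm{Par})\subset\mathbb{Q}[x_i;i\ge1]$ we have $[c,d]=\varepsilon(c)(d)-\varepsilon(d)(c)$ in $\Lambda_1(\mathbb{Q}\mathrm{Par})\subset\mathbb{Q}[x_i;i\ge1]$.
   Context: The nonsymmetric operad of partitions $\mathrm{Par}$: $\mathrm{Par}((1))=\{1\}$, and for $m\ge2$, $\mathrm{Par}((m))$ is the set of monomials $\prod_{i=1}^Nx_i^{a_i}$ in $\mathbb{Q}[x_i;i\ge1]$ with $N\ge2$, all $a_i\ge1$, $\sum a_i=m$. Partial composition: if $a_1+\dots+a_{l-1}+1\le s\le a_1+\dots+a_l$, then $\left(\prod_{i=1}^Nx_i^{a_i}\right)\circ_s\left(\prod_{k=1}^{N_s}x_k^{b_k}\right)=x_l^{a_l-1+\sum_kb_k}\prod_{i\ne l}x_i^{a_i}$; $1$ is a two-sided unit. $\Lambda(\mathbb{Q}\mathrm{Par})=\bigoplus_{m\ge1}\mathbb{Q}\mathrm{Par}((m))$ with Lie bracket $[c,d]=\sum_{t=1}^{j}d\circ_tc-\sum_{s=1}^{k}c\circ_sd$ for $c\in\mathrm{Par}((k))$, $d\in\mathrm{Par}((j))$; $\Lambda_1(\mathbb{Q}\mathrm{Par})=\bigoplus_{m\ge2}\mathbb{Q}\mathrm{Par}((m))$, viewed as a subspace of $\mathbb{Q}[x_i;i\ge1]$. Let $L_0=x\mathbb{Q}[x]\frac{d}{dx}$. The augmentation $\varepsilon:\Lambda(\mathbb{Q}\mathrm{Par})\to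 L_0$ is the linear map sending each basis element of $\mathrm{Par}((m))$ to $x^m\frac{d}{dx}$. $L_0$ acts on $\mathbb{Q}[x_i;i\ge1]$ diagonally: $\left(\xi(x)\frac{d}{dx}\right)(f)=\sum_{i\ge1}\xi(x_i)\frac{\partial f}{\partial x_i}$. *)

From HB Require Import structures.
From mathcomp Require Import all_boot all_order all_algebra.
From mathcomp Require Import mpoly.
Set Implicit Arguments. Unset Strict Implicit. Unset Printing Implicit Defensive.
Import Order.TTheory GRing.Theory Num.Theory.
Local Open Scope ring_scope.

(* A monomial prod_{i=1}^N x_i^{a_i} is encoded by its exponent list
   [:: a_1; ...; a_N].  It lies in Par((m)), m >= 2, iff N >= 2 and all a_i >= 1
   (then m = sumn a). *)
Definition is_par (a : seq nat) : bool := (2 <= size a)%N && all (fun k => 0 < k)%N a.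

(* Partial composition  a o_s b  (1 <= s <= sumn a): l (0-based) is the first
   index with s <= a_1 + ... + a_{l+1}; replace a_l by a_l - 1 + sumn b. *)
Definition par_index (a : seq nat) (s : nat) : nat :=
  find (fun l => s <= sumn (take l.+1 a))%N (iota 0 (size a)).
Definition par_comp (a : seq nat) (s : nat) (b : seq nat) : seq nat :=
  let l := par_index a s in set_nth 0%N a l (nth 0%N a l - 1 + sumn b)%N.

(* The monomial of an exponent list, in Q[x_1..x_n]; x_i is 'X_(i-1). *)
Definition parmono (n : nat) (a : seq nat) : {mpoly rat[n]} :=
  \prod_(i < n) 'X_i ^+ nth 0%N a i.

(* Elements of Lambda(QPar) (here of Lambda_1) are finite formal linear
   combinations: lists of (coefficient, basis element). *)
Definition emb (n : nat) (cs : seq (rat * seq nat)) : {mpoly rat[n]} :=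
  \sum_(p <- cs) p.1 *: parmono n p.2.

Definition par_bracket (n : nat) (c d : seq nat) : {mpoly rat[n]} :=
  \sum_(1 <= t < (sumn d).+1) parmono n (par_comp d t c)
  - \sum_(1 <= s < (sumn c).+1) parmono n (par_comp c s d).

Definition lie_bracket (n : nat) (cs ds : seq (rat * seq nat)) : {mpoly rat[n]} :=
  \sum_(p <- cs) \sum_(q <- ds) (p.1 * q.1) *: par_bracket n p.2 q.2.

(* Augmentation: an element xi(x) d/dx of L_0 is encoded by xi : {poly rat};
   eps sends a basis element of Par((m)) to x^m d/dx. *)
Definition eps (cs : seq (rat * seq nat)) : {poly rat} :=
  \sum_(p <- cs) p.1 *: 'X^(sumn p.2).

Definition L0_act (n : nat) (xi : {poly rat}) (f : {mpoly rat[n]}) : {mpoly rat[n]} :=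
  \sum_(i < n) (map_poly (@mpolyC n rat) xi).['X_i] * mderiv i f.

From HB Require Import structures.
From mathcomp Require Import all_boot all_order all_algebra.
From mathcomp Require Import mpoly.
Import GRing.Theory.
Local Open Scope ring_scope.

(* The vector field x^m d/dx sends the monomial with exponents b to
   sum_i b_i x^(b with b_i replaced by b_i - 1 + m).  In sum_{t=1}^{|b|} b o_t c
   the slot t lands in block l for exactly b_l values of t, and there
   b o_t c replaces b_l by b_l - 1 + |c|.  Hence the basis bracket [c, d] is
   eps(c)(d) - eps(d)(c), and both sides of the theorem are bilinear. *)

Lemma par_index_cons x b t :
  par_index (x :: b) t = if (t <= x)%N then 0%N else (par_index b (t - x)).+1.
Proof.
rewrite /par_index /= take0 addn0.
case: ifP => // /negbT; rewrite -ltnNge => ltxt.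
congr _.+1; rewrite (iotaDl 1 0) find_map; apply: eq_find => l /=.
by rewrite leq_subLR.
Qed.

Lemma sum_par_index (M : nmodType) (b : seq nat) (G : nat -> M) :
  \sum_(1 <= t < (sumn b).+1) G (par_index b t)
  = \sum_(l < size b) G l *+ nth 0%N b l.
Proof.
elim: b G => [|x b IH] G; first by rewrite big_nil big_ord0.
rewrite big_ord_recl /= -(IH (fun l => G l.+1)).
rewrite (@big_cat_nat _ _ _ x.+1) //=; last by rewrite ltnS leq_addr.
congr (_ + _).
  rewrite (eq_big_nat _ _ (F2 := fun _ => G 0%N)); last first.
    by move=> t /andP[_]; rewrite ltnS par_index_cons => ->.
  by rewrite sumr_const_nat subn1.
rewrite -addSn -(addn1 x) big_addn addnAC addnK.
rewrite (big_addn 0 _ x) addKn (big_addn 0 _ 1) subn1 /=.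
apply: eq_bigr => t _.
rewrite par_index_cons ifN; last by rewrite -ltnNge addn1 ltnS leq_addl.
by rewrite addnAC addnK.
Qed.

Definition par_mnm n (b : seq nat) : 'X_{1..n} := [multinom nth 0%N b i | i < n].

Lemma parmonoE n b : parmono n b = 'X_[par_mnm n b].
Proof. by rewrite /parmono mpolyXE_id; apply: eq_bigr => i _; rewrite mnmE. Qed.

Lemma L0_act_Xn_parmono n m b : L0_act 'X^m (parmono n b)
  = \sum_(i < n) parmono n (set_nth 0%N b i (nth 0%N b i - 1 + m)%N) *+ nth 0%N b i.
Proof.
rewrite /L0_act; apply: eq_bigr => i _.
rewrite map_polyXn hornerXn parmonoE mderivX mnmE.
case E: (nth 0%N b i) => [|e]; first by rewrite scale0r mulr0 mulr0n.
rewrite scaler_nat mulrnAr mpolyXn -mpolyXD; congr (_ *+ _).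
rewrite parmonoE; congr 'X_[_]; apply/mnmP => j.
rewrite mnmDE mnmBE mulmnE !mnmE nth_set_nth /=.
case: (eqVneq j i) => [->|ne]; first by rewrite !eqxx E subn1 /= mul1n addnC.
have ne' : (nat_of_ord j != nat_of_ord i) by [].
by rewrite (negbTE ne') mul0n add0n subn0.
Qed.

Lemma sum_par_comp n a b : (size b <= n)%N ->
  \sum_(1 <= t < (sumn b).+1) parmono n (par_comp b t a)
  = L0_act 'X^(sumn a) (parmono n b).
Proof.
move=> size_b; rewrite L0_act_Xn_parmono.
pose F l := parmono n (set_nth 0%N b l (nth 0%N b l - 1 + sumn a)%N).
rewrite (sum_par_index _ b F) (big_ord_widen n (fun l => F l *+ nth 0%N b l) size_b).
rewrite big_mkcond /=; apply: eq_bigr => i _.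
case: ifP => // /negbT; rewrite -leqNgt => le_b_i.
by rewrite nth_default // mulr0n.
Qed.

Lemma par_bracketE n c d : (size c <= n)%N -> (size d <= n)%N ->
  par_bracket n c d
  = L0_act 'X^(sumn c) (parmono n d) - L0_act 'X^(sumn d) (parmono n c).
Proof. by move=> size_c size_d; rewrite /par_bracket !sum_par_comp. Qed.

Lemma L0_act_suml n I (r : seq I) (k : I -> rat) (xi : I -> {poly rat}) f :
  L0_act (\sum_(p <- r) k p *: xi p) f = \sum_(p <- r) k p *: L0_act (xi p) f :> {mpoly rat[n]}.
Proof.
rewrite /L0_act; under eq_bigr => i _.
  rewrite raddf_sum /= horner_sum mulr_suml.
  under eq_bigr => p _ do rewrite map_polyZ hornerZ -mulrA mul_mpolyC.
  over.
by rewrite exchange_big; apply: eq_bigr => p _; rewrite scaler_sumr.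
Qed.

Lemma L0_act_sumr n I (r : seq I) (k : I -> rat) xi (g : I -> {mpoly rat[n]}) :
  L0_act xi (\sum_(p <- r) k p *: g p) = \sum_(p <- r) k p *: L0_act xi (g p).
Proof.
rewrite /L0_act; under eq_bigr => i _.
  rewrite raddf_sum /= mulr_sumr.
  under eq_bigr => p _ do rewrite mderivZ -scalerAr.
  over.
by rewrite exchange_big; apply: eq_bigr => p _; rewrite scaler_sumr.
Qed.

Lemma L0_act_eps_emb n cs ds :
  L0_act (eps cs) (emb n ds)
  = \sum_(p <- cs) \sum_(q <- ds) (p.1 * q.1) *: L0_act 'X^(sumn p.2) (parmono n q.2).
Proof.
rewrite /eps /emb L0_act_suml; apply: eq_bigr => p _.
by rewrite L0_act_sumr scaler_sumr; apply: eq_bigr => q _; rewrite scalerA.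
Qed.

Theorem lemma4p1 (n : nat) (cs ds : seq (rat * seq nat)) :
  all (fun p => is_par p.2 && (size p.2 <= n)%N) cs ->
  all (fun p => is_par p.2 && (size p.2 <= n)%N) ds ->
  lie_bracket n cs ds = L0_act (eps cs) (emb n ds) - L0_act (eps ds) (emb n cs).
Proof.
move=> /allP cs_par /allP ds_par.
rewrite !L0_act_eps_emb [X in _ - X]exchange_big -sumrB.
apply: eq_big_seq => p /cs_par /andP[_ size_p]; rewrite -sumrB.
apply: eq_big_seq => q /ds_par /andP[_ size_q].
by rewrite par_bracketE // scalerBr [q.1 * _]mulrC.
Qed.
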